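(* Consider the network and the protocols described in the context. Let fairMAC$_0$ denote fairMAC with a finite maximum number of pending packets $P$ and with maximum number of forwarded packets per joint packet $Q=0$. Then the long-term throughput per node and the long-term bit-cost of every node under fairMAC$_0$ equal those of Direct Link: $$\mathsf{S}^{\mathrm{fair}_0}=\mathsf{S}^{\mathrm{direct}}\quad\text{and}\quad \mathsf{B}^{\mathrm{fair}_0}_k=\mathsf{B}^{\mathrm{direct}}_k\ \text{ for all } k=1,\dots,N.$$
   Context: Network model: $N$ nodes transmit data to a common access point (AP). For nodes $k,l$, $R_{kl}>0$ is the achievable rate (bit/s) from $k$ to $l$, and $R_k>0$ the rate from $k$ directly to the AP; rates are constant in time. Each packet carries 1 bit of data, so a transmission at rate $R$ lasts $1/R$. Node $h$ is the helper $h_k$ of node $k$ iff $h=\arg\min_{l}\bigl(1/R_{kl}+1/R_l\bigr)$ and $1/R_{kh}+1/R_h<1/R_k$; otherwise $k$ has no helper. All nodes transmit with the same power $\mathcal{E}$ while transmitting. All nodes are saturated (always have own data to send). Medium access is slotted CSMA with slot length $\sigma$ and transmit probability $\tau$: a node that senses an idle slot starts a transmission of an own packet in the next slot with probability $\tau$; a packet is lost (collision) iff another node transmits simultaneously; otherwise the receiver decodes it. Control headers and acknowledgments (ACKs) have negligible duration, are decodable by all nodes, and are never lost; the only packet losses are collisions. Direct Link: every node transmits each own packet directly to the AP at its rate; on success the AP sends an ACK; on collision the node retransmits the same packet later. fairMAC (parameters $P$, $Q$): a node $k$ with helper $h$ keeps a counter $p$ (pending packets, initially 0). While $p\le P$,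 $k$ sends its packet to $h$ at rate $R_{kh}$; if $h$ decodes it, $h$ appends it to an infinite forwarding queue, sends a ''preACK'' to $k$, and $k$ increases $p$ by one; once $p$ exceeds $P$, $k$ transmits its current packet directly to the AP. When a helper $h$ wins the medium it sends one joint packet at rate $R_h$ consisting of one own packet plus up to $Q$ packets from its forwarding queue; if no collision occurs the AP sends one ''jointACK'' to $h$ and to all nodes with data in the joint packet; $h$ removes these from its queue and each such source decreases $p$ by the number of its packets forwarded. Nodes without helper behave as in Direct Link. Throughput $\mathsf{S}_k$ of node $k$: long-term average number of own data bits of $k$ successfully delivered to the AP per unit time (forwarded data of others does not count). Average power $\bar{\mathcal{E}}_k$: $\mathcal{E}$ times the long-term fraction of time node $k$ transmits (including forwarding). Bit-cost $\mathsf{B}_k=\bar{\mathcal{E}}_k/\mathsf{S}_k$. All nodes have the same throughput, denoted $\mathsf{S}$. *)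

From HB Require Import structures.
From mathcomp Require Import all_boot all_order all_algebra.
From mathcomp Require Import all_classical all_reals all_analysis.
Set Implicit Arguments. Unset Strict Implicit. Unset Printing Implicit Defensive.
Import Order.TTheory GRing.Theory Num.Theory.
Import numFieldNormedType.Exports.
Local Open Scope classical_set_scope.
Local Open Scope ring_scope.

(* Nodes are 'I_N.  Rl k l = R_{kl} (rate k -> l), Ra k = R_k (rate k -> AP). *)

Definition is_helper_map (R : realType) (N : nat) (Rl : 'I_N -> 'I_N -> R)
    (Ra : 'I_N -> R) (helper : 'I_N -> option 'I_N) : Prop :=
  forall k : 'I_N,
  match helper k with
  | Some h => h != k
      /\ (forall l, l != k -> (Rl k h)^-1 + (Ra h)^-1 <= (Rl k l)^-1 + (Ra l)^-1)
      /\ (Rl k h)^-1 + (Ra h)^-1 < (Ra k)^-1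
  | None => forall l, l != k -> ~ ((Rl k l)^-1 + (Ra l)^-1 < (Ra k)^-1)
  end.

(* Round n
   consists of one idle slot of length sigma, after which the set A_n of
   nodes that decided to transmit start simultaneously; node k transmits
   for dur n k (0 if k does not transmit); the medium is busy until the
   longest of these transmissions ends.  bits n k = number of own data bits
   of node k delivered to the AP in round n (delivered at the end of the
   busy period, which for a successful round is the end of the unique
   transmission). *)

Definition busy (R : realType) (N : nat) (dur : nat -> 'I_N -> R) (n : nat) : R :=
  \big[Num.max/0]_(k < N) dur n k.

Definition round_start (R : realType) (N : nat) (sigma : R)
    (dur : nat -> 'I_N -> R) (n : nat) : R :=
  \sum_(i < n) (sigma + busy dur i).

(* every round lasts at least sigma, so rounds n >= rounds_by sigma t start
   after time t *)
Definition rounds_by (R : realType) (sigma t : R) : nat :=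
  (Num.truncn (t / sigma)).+1.

Definition delivered_by (R : realType) (N : nat) (sigma : R)
    (dur : nat -> 'I_N -> R) (bits : nat -> 'I_N -> nat) (k : 'I_N) (t : R) : R :=
  \sum_(n < rounds_by sigma t)
    (if round_start sigma dur n + sigma + busy dur n <= t
     then (bits n k)%:R else 0).

Definition txtime_by (R : realType) (N : nat) (sigma : R)
    (dur : nat -> 'I_N -> R) (k : 'I_N) (t : R) : R :=
  \sum_(n < rounds_by sigma t)
    Num.max 0 (Num.min (round_start sigma dur n + sigma + dur n k) t
               - (round_start sigma dur n + sigma)).

(* A protocol maps the sequence of attempt decisions (A n k = node k
   transmits in round n) to the per-round durations and delivered bits. *)
Definition protocol (R : realType) (N : nat) :=
  (nat -> 'I_N -> bool) -> (nat -> 'I_N -> R) * (nat -> 'I_N -> nat).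

Definition success (N : nat) (A : 'I_N -> bool) (k : 'I_N) : bool :=
  A k && [forall j, A j ==> (j == k)].

Definition direct (R : realType) (N : nat) (Ra : 'I_N -> R) : protocol R N :=
  fun A => (fun n k => if A n k then (Ra k)^-1 else 0,
            fun n k => nat_of_bool (success (A n) k)).

(* ---------- fairMAC(P, Q) ----------
   State: pending counters p and forwarding queues (FIFO sequences of the
   source nodes of the queued packets). *)
Definition fstate (N : nat) : Type := ('I_N -> nat) * ('I_N -> seq 'I_N).

Definition fstate0 (N : nat) : fstate N := (fun _ => 0%N, fun _ => [::]).

Definition to_helper (N : nat) (helper : 'I_N -> option 'I_N) (P : nat)
    (st : fstate N) (k : 'I_N) : option 'I_N :=
  match helper k with
  | Some h => if (st.1 k <= P)%N then Some h else None
  | None => None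
  end.

Definition nfwd (N : nat) (Q : nat) (st : fstate N) (k : 'I_N) : nat :=
  minn Q (size (st.2 k)).

Definition fdur (R : realType) (N : nat) (Rl : 'I_N -> 'I_N -> R) (Ra : 'I_N -> R)
    (helper : 'I_N -> option 'I_N) (P Q : nat) (st : fstate N)
    (A : 'I_N -> bool) (k : 'I_N) : R :=
  if A k then
    match to_helper helper P st k with
    | Some h => (Rl k h)^-1
    | None => (1 + (nfwd Q st k)%:R) / Ra k
    end
  else 0.

Definition fbits (N : nat) (helper : 'I_N -> option 'I_N) (P Q : nat)
    (st : fstate N) (A : 'I_N -> bool) (j : 'I_N) : nat :=
  \sum_(k < N)
    (if success A k && (to_helper helper P st k == None)
     then ((j == k) + count_mem j (take (nfwd Q st k) (st.2 k)))%N
     else 0%N).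

Definition fnext (N : nat) (helper : 'I_N -> option 'I_N) (P Q : nat)
    (st : fstate N) (A : 'I_N -> bool) : fstate N :=
  match [pick k | success A k] with
  | Some k =>
      match to_helper helper P st k with
      | Some h =>
          (fun j => if j == k then (st.1 j).+1 else st.1 j,
           fun j => if j == h then rcons (st.2 j) k else st.2 j)
      | None =>
          let f := take (nfwd Q st k) (st.2 k) in
          (fun j => (st.1 j - count_mem j f)%N,
           fun j => if j == k then drop (nfwd Q st k) (st.2 j) else st.2 j)
      end
  | None => st
  end.

Fixpoint fstate_at (N : nat) (helper : 'I_N -> option 'I_N) (P Q : nat)
    (A : nat -> 'I_N -> bool) (n : nat) : fstate N :=
  match n with
  | 0 => fstate0 N
  | m.+1 => fnext helper P Q (fstate_at helper P Q A m) (A m)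
  end.

Definition fairmac (R : realType) (N : nat) (Rl : 'I_N -> 'I_N -> R)
    (Ra : 'I_N -> R) (helper : 'I_N -> option 'I_N) (P Q : nat) : protocol R N :=
  fun A => (fun n k => fdur Rl Ra helper P Q (fstate_at helper P Q A n) (A n) k,
            fun n k => fbits helper P Q (fstate_at helper P Q A n) (A n) k).

(* ---------- Randomness ----------
   X n k w = node k decides to transmit in round n.  These are mutually
   independent Bernoulli(tau) events. *)
Definition bernoulli_attempts (R : realType) (N : nat) (d : measure_display)
    (T : measurableType d) (Pr : probability T R)
    (X : nat -> 'I_N -> T -> bool) (tau : R) : Prop :=
  (forall n k, measurable [set w | X n k w]) /\
  (forall s : seq (nat * 'I_N), uniq s ->
     Pr (\big[setI/setT]_(i <- s) [set w | X i.1 i.2 w]) = (tau ^+ size s)%:E).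

Definition throughput_is (R : realType) (N : nat) (d : measure_display)
    (T : measurableType d) (Pr : probability T R)
    (X : nat -> 'I_N -> T -> bool) (sigma : R) (proto : protocol R N)
    (k : 'I_N) (S : R) : Prop :=
  {ae Pr, forall w,
    let o := proto (fun n j => X n j w) in
    (delivered_by sigma o.1 o.2 k t / t) @[t --> +oo] --> S}.

Definition avg_power_is (R : realType) (N : nat) (d : measure_display)
    (T : measurableType d) (Pr : probability T R)
    (X : nat -> 'I_N -> T -> bool) (sigma En : R) (proto : protocol R N)
    (k : 'I_N) (Eb : R) : Prop :=
  {ae Pr, forall w,
    let o := proto (fun n j => X n j w) in
    (En * txtime_by sigma o.1 k t / t) @[t --> +oo] --> Eb}.

Definition bitcost_is (R : realType) (N : nat) (d : measure_display)
    (T : measurableType d) (Pr : probability T R)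
    (X : nat -> 'I_N -> T -> bool) (sigma En : R) (proto : protocol R N)
    (k : 'I_N) (B : R) : Prop :=
  exists Eb S, avg_power_is Pr X sigma En proto k Eb
            /\ throughput_is Pr X sigma proto k S /\ B = Eb / S.

(* With [Q = 0] a helper never forwards anything, so no packet handed to a
   helper is ever jointACKed and the pending counter of a node never
   decreases, while every success of a node that still uses its helper
   increments it.  Almost surely every node succeeds infinitely often (a node
   fails to succeed during L given rounds with probability
   (1 - tau (1 - tau)^(N-1))^L), so after some random round no node uses its
   helper any more and fairMAC_0 acts exactly as Direct Link.  Two schedules
   that agree from some round on have delivered-bit and transmit-time curves
   that differ, up to a fixed time shift, by a bounded amount, which vanishes
   in the long-term averages. *)

From HB Require Import structures.
From mathcomp Require Import all_boot all_order all_algebra.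
From mathcomp Require Import all_classical all_reals all_analysis.
From mathcomp Require Import ring lra.
Import Order.TTheory GRing.Theory Num.Theory.
Import numFieldNormedType.Exports.
Local Open Scope classical_set_scope.
Local Open Scope ring_scope.
Set Implicit Arguments. Unset Strict Implicit.

Definition succeeds_infinitely_often (N : nat) (A : nat -> 'I_N -> bool) : Prop :=
  forall (k : 'I_N) (m : nat), exists2 n, (m <= n)%N & success (A n) k.

Lemma success_uniq (N : nat) (A : 'I_N -> bool) (k k' : 'I_N) :
  success A k -> success A k' -> k = k'.
Proof.
by move=> /andP[_ /forallP/(_ k')] /[swap] /andP[-> _] /eqP.
Qed.

Section attempt_events.
Variables (N : nat) (T : Type) (X : nat -> 'I_N -> T -> bool).

Definition attempt_lit (x : (nat * 'I_N) * bool) : set T :=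
  [set w | X x.1.1 x.1.2 w = x.2].

Definition attempt_lits (s : seq ((nat * 'I_N) * bool)) : set T :=
  \big[setI/setT]_(x <- s) attempt_lit x.

Definition attempts (p : seq (nat * 'I_N)) : set T :=
  \big[setI/setT]_(i <- p) [set w | X i.1 i.2 w].

Definition success_lits (k : 'I_N) (n : nat) : seq ((nat * 'I_N) * bool) :=
  [seq ((n, j), j == k) | j <- enum 'I_N].

Definition no_success_in (k : 'I_N) (W : seq nat) : set T :=
  \big[setI/setT]_(n <- W) ~` attempt_lits (success_lits k n).

Lemma attempt_lits_success k n w :
  attempt_lits (success_lits k n) w <-> success (fun j => X n j w) k.
Proof.
rewrite /attempt_lits /success_lits big_map -bigcap_seq; split.
  move=> H; apply/andP; split.
    by have := H k (mem_enum _ _); rewrite /attempt_lit /= eqxx.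
  apply/forallP => j; apply/implyP => Xj.
  by have := H j (mem_enum _ _); rewrite /attempt_lit /= Xj => <-.
move=> /andP[Xk /forallP Xonly] j _; rewrite /attempt_lit /=.
have [-> //|njk] := eqVneq j k.
by apply/negbTE/negP => Xj; move: (Xonly j); rewrite Xj (negbTE njk).
Qed.

Lemma success_lits_keys k n :
  map fst (success_lits k n) = [seq (n, j) | j <- enum 'I_N].
Proof. by rewrite -map_comp. Qed.

End attempt_events.

Definition lits_weight (R : pzRingType) (I : Type) (tau : R) (s : seq (I * bool)) : R :=
  \prod_(x <- s) (if x.2 then tau else 1 - tau).

Lemma lits_weight_success (R : comPzRingType) (N : nat) (tau : R) (k : 'I_N) n :
  lits_weight tau (success_lits k n) = tau * (1 - tau) ^+ N.-1.
Proof.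
rewrite /lits_weight big_map big_enum /= (bigD1 k) //= eqxx; congr (_ * _).
rewrite (eq_bigr (fun=> 1 - tau)) => [|j /negbTE ->//].
by rewrite prodr_const cardC1 card_ord.
Qed.

Lemma le0_of_le_expr (R : realType) (a z : R) :
  `|z| < 1 -> (forall n, a <= z ^+ n) -> a <= 0.
Proof.
move=> z1 le_a; rewrite -(cvg_lim _ (cvg_expr z1)) //.
apply: limr_ge.
  exact: cvgP (cvg_expr z1).
exact: nearW.
Qed.

Section bernoulli_attempts.
Variables (R : realType) (N : nat) (d : measure_display) (T : measurableType d).
Variables (Pr : probability T R) (X : nat -> 'I_N -> T -> bool) (tau : R).
Hypothesis hX : bernoulli_attempts Pr X tau.

Lemma measurable_attempt_lit x : measurable (attempt_lit X x).
Proof.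
case: x => [[n k] []]; first exact: hX.1.
rewrite (_ : attempt_lit _ _ = ~` [set w | X n k w]); first exact/measurableC/hX.1.
by apply/seteqP; split => w; rewrite /attempt_lit /=; case: (X n k w).
Qed.

Lemma measurable_attempt_lits s : measurable (attempt_lits X s).
Proof. by apply: bigsetI_measurable => x _; exact: measurable_attempt_lit. Qed.

Lemma measurable_attempts p : measurable (attempts X p).
Proof. by apply: bigsetI_measurable => x _; exact: hX.1. Qed.

Lemma measurable_no_success_in k W : measurable (no_success_in X k W).
Proof.
by apply: bigsetI_measurable => n _; exact/measurableC/measurable_attempt_lits.
Qed.

Lemma probability_setIC (A B : set T) : measurable A -> measurable B ->
  Pr (A `&` ~` B) = (Pr A - Pr (A `&` B))%E.
Proof.
move=> mA mB; rewrite -setDE measureD //.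
exact: le_lt_trans (probability_le1 Pr mA) (ltry _).
Qed.

(* Negative literals are eliminated one at a time by complementation, which
   only ever needs the product rule for positive literals. *)
Lemma prob_attempts_lits s p : uniq (p ++ map fst s) ->
  Pr (attempts X p `&` attempt_lits X s) = (tau ^+ size p * lits_weight tau s)%:E.
Proof.
elim: s p => [|[x b] s IH] p.
  by rewrite cats0 /attempt_lits /lits_weight !big_nil setIT mulr1; exact: hX.2.
move=> up; have up' : uniq ((x :: p) ++ map fst s).
  by move: up; rewrite /= -[x :: map _ _]cat1s uniq_catCA.
have {}up : uniq (p ++ map fst s) by case/andP: up'.
have attempts_cons : attempts X p `&` [set w | X x.1 x.2 w] = attempts X (x :: p).
  by rewrite /attempts big_cons setIC.
rewrite /attempt_lits /lits_weight !big_cons -/(attempt_lits X s) -/(lits_weight tau s) /=.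
case: b.
  by rewrite setIA attempts_cons IH // exprS mulrA (mulrC tau).
have -> : attempts X p `&` (attempt_lit X (x, false) `&` attempt_lits X s) =
    (attempts X p `&` attempt_lits X s) `&` ~` [set w | X x.1 x.2 w].
  apply/seteqP; split => w; rewrite /attempt_lit /=.
    by move=> [pw [/negbT/negP nx lw]].
  by move=> [[pw lw] /negP/negbTE nx].
rewrite probability_setIC; first last.
- exact: hX.1.
- exact: measurableI (measurable_attempts _) (measurable_attempt_lits _).
rewrite setIAC attempts_cons !IH // -EFinB /= exprS; congr (_%:E); ring.
Qed.

Local Notation q := (tau * (1 - tau) ^+ N.-1).

Lemma prob_attempt_lits_no_success k W s :
  uniq W -> uniq (map fst s) -> {in map fst s, forall x, x.1 \notin W} ->
  Pr (attempt_lits X s `&` no_success_in X k W) =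
  (lits_weight tau s * (1 - q) ^+ size W)%:E.
Proof.
elim: W s => [|n W IH] s.
  move=> _ us _; rewrite /no_success_in big_nil setIT expr0 mulr1.
  by have := prob_attempts_lits (p := [::]) us; rewrite /attempts big_nil setTI mul1r.
move=> /= /andP[nW uW] us disj.
have disjW : {in map fst s, forall x, x.1 \notin W}.
  by move=> x /disj; rewrite inE negb_or => /andP[].
have us' : uniq (map fst (s ++ success_lits k n)).
  rewrite map_cat cat_uniq us success_lits_keys map_inj_uniq ?enum_uniq ?andbT;
    last by move=> a b [].
  apply/hasPn => y /mapP[j _ ->]; apply/negP => /disj.
  by rewrite /= inE eqxx.
have disj' : {in map fst (s ++ success_lits k n), forall x, x.1 \notin W}.
  by move=> x; rewrite map_cat mem_cat success_lits_keys => /orP[/disjW //|/mapP[j _ ->]].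
have lits_cat : attempt_lits X (s ++ success_lits k n) =
    attempt_lits X s `&` attempt_lits X (success_lits k n).
  by rewrite /attempt_lits big_cat.
rewrite /no_success_in big_cons -/(no_success_in X k W) setICA setIC.
rewrite probability_setIC; first last.
- exact: measurable_attempt_lits.
- exact: measurableI (measurable_attempt_lits _) (measurable_no_success_in _ _).
rewrite setIAC -lits_cat IH // IH // -EFinB /= exprS.
rewrite /lits_weight big_cat /= -!/(lits_weight _ _) lits_weight_success.
congr (_%:E); ring.
Qed.

Lemma prob_never_success_from k m :
  0 < tau -> tau < 1 -> Pr (\bigcap_L no_success_in X k (iota m L)) = 0%E.
Proof.
move=> tau_gt0 tau_lt1.
have mB : measurable (\bigcap_L no_success_in X k (iota m L)).
  by apply: bigcapT_measurable => L; exact: measurable_no_success_in.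
have q_gt0 : 0 < q by rewrite mulr_gt0 // exprn_gt0 // subr_gt0.
have pow_le1 : (1 - tau) ^+ N.-1 <= 1 by apply: exprn_ile1; lra.
have q_le_tau : q <= tau by rewrite -[leRHS]mulr1 ler_wpM2l // ltW.
have window L : (Pr (\bigcap_L no_success_in X k (iota m L)) <= ((1 - q) ^+ L)%:E)%E.
  have no_keys : {in map fst ([::] : seq ((nat * 'I_N) * bool)), forall x,
    x.1 \notin iota m L} by [].
  have := @prob_attempt_lits_no_success k (iota m L) [::] (iota_uniq m L) isT no_keys.
  rewrite /attempt_lits big_nil setTI /lits_weight big_nil mul1r size_iota => <-.
  apply: le_measure; rewrite ?inE //; last exact: bigcap_inf.
  exact: measurable_no_success_in.
have fin : Pr (\bigcap_L no_success_in X k (iota m L)) \is a fin_num.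
  by rewrite ge0_fin_numE ?measure_ge0 // (le_lt_trans (probability_le1 Pr mB) (ltry _)).
rewrite -(fineK fin); congr (_%:E); apply/le_anti/andP; split; last first.
  by rewrite fine_ge0 ?measure_ge0.
apply: (@le0_of_le_expr _ _ (1 - q)) => [|L]; last by rewrite -lee_fin fineK.
rewrite ger0_norm; [rewrite ltrBlDr ltrDl // | rewrite subr_ge0]; lra.
Qed.

Lemma succeeds_infinitely_often_ae : 0 < tau -> tau < 1 ->
  {ae Pr, forall w, succeeds_infinitely_often (fun n j => X n j w)}.
Proof.
move=> tau_gt0 tau_lt1; apply: filter_forall => k; apply: ae_foralln => m.
apply: (@negligibleS _ _ _ _ (\bigcap_L no_success_in X k (iota m L))).
  move=> w /= no_succ L _; rewrite /no_success_in -bigcap_seq => n /=.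
  rewrite mem_iota => /andP[mn _] /attempt_lits_success succ.
  by apply: no_succ; exists n.
apply/negligibleP; last exact: prob_never_success_from.
by apply: bigcapT_measurable => L; exact: measurable_no_success_in.
Qed.

End bernoulli_attempts.

Section fairmac0_dynamics.
Variables (N : nat) (helper : 'I_N -> option 'I_N) (P : nat).
Variable A : nat -> 'I_N -> bool.

Local Notation pending n := (fstate_at helper P 0 A n).1.
Local Notation uses_helper n k := (to_helper helper P (fstate_at helper P 0 A n) k).

Lemma fnext0_pending_mono st A0 j : (st.1 j <= (fnext helper P 0 st A0).1 j)%N.
Proof.
rewrite /fnext; case: pickP => [k _|//].
case: (to_helper helper P st k) => [h|] /=; first by case: (j == k).
by rewrite /nfwd min0n take0 subn0.
Qed.

Lemma pending_mono j : {homo (fun n => pending n j) : m n / (m <= n)%N}.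
Proof.
move=> m n; elim: n => [|n IH]; first by rewrite leqn0 => /eqP ->.
rewrite leq_eqVlt => /orP[/eqP -> //|lt_mn].
exact: leq_trans (IH lt_mn) (fnext0_pending_mono _ _ _).
Qed.

Lemma pending_succ_helper n k h : success (A n) k -> uses_helper n k = Some h ->
  pending n.+1 k = (pending n k).+1.
Proof.
move=> succ_k used; rewrite /= /fnext.
case: pickP => [k' succ_k'|]; last by move/(_ k); rewrite succ_k.
by rewrite -(success_uniq succ_k succ_k') used /= eqxx.
Qed.

Lemma pending_exceeds k h : succeeds_infinitely_often A -> helper k = Some h ->
  exists n, (P < pending n k)%N.
Proof.
move=> io hk.
suff reach c : (c <= P.+1)%N -> exists n, (c <= pending n k)%N by exact: reach.
elim: c => [|c IH] le_c; first by exists 0%N.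
have [n le_cn] := IH (ltnW le_c); have [n' le_nn' succ_k] := io k n.
have [lt_c|le_pc] := ltnP c (pending n' k); first by exists n'.
exists n'.+1; suff used : uses_helper n' k = Some h.
  rewrite (pending_succ_helper succ_k used) ltnS.
  exact: leq_trans le_cn (pending_mono k le_nn').
by rewrite /to_helper hk (leq_trans le_pc) // -ltnS.
Qed.

Lemma eventually_no_helper : succeeds_infinitely_often A ->
  exists n0, forall n k, (n0 <= n)%N -> uses_helper n k = None.
Proof.
move=> io.
have node k : exists nk, forall n, (nk <= n)%N -> uses_helper n k = None.
  case hk: (helper k) => [h|]; last by exists 0%N => n _; rewrite /to_helper hk.
  have [nk exceeds] := pending_exceeds io hk.
  exists nk => n le_n; rewrite /to_helper hk leqNgt.
  by rewrite (leq_trans exceeds (pending_mono k le_n)).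
have [f fP] := choice node.
by exists (\max_k f k) => n k le_n; apply: fP; exact: leq_trans (leq_bigmax k) le_n.
Qed.

Lemma fairmac0_eq_direct (R : realType) (Rl : 'I_N -> 'I_N -> R) (Ra : 'I_N -> R) n :
  (forall k, uses_helper n k = None) ->
  (fairmac Rl Ra helper P 0 A).1 n = (direct Ra A).1 n /\
  (fairmac Rl Ra helper P 0 A).2 n = (direct Ra A).2 n.
Proof.
move=> direct_n; split; apply: funext => k /=.
  by rewrite /fdur direct_n /nfwd min0n addr0 div1r.
rewrite /fbits (bigD1 k) //= big1 ?addn0 => [|j /negbTE njk].
  by rewrite direct_n eqxx andbT /nfwd min0n take0 /= addn0 eqxx; case: success.
by rewrite direct_n /nfwd min0n take0 /= addn0 eq_sym njk; case: ifP.
Qed.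

End fairmac0_dynamics.

Lemma sum_ord_extend (R : nmodType) (F : nat -> R) m M : (m <= M)%N ->
  (forall n, (m <= n)%N -> F n = 0) -> \sum_(n < m) F n = \sum_(n < M) F n.
Proof.
move=> le_mM F0; rewrite (big_ord_widen _ _ le_mM) big_mkcond /=.
by apply: eq_bigr => n _; case: ifP => // /negbT; rewrite -leqNgt => /F0 ->.
Qed.

Lemma minrBl_shift (R : realDomainType) (x t c : R) :
  Num.min (c + x) t - c = Num.min x (t - c).
Proof.
have [le_t|lt_t] := leP (c + x) t.
  by rewrite min_l ?lerBrDl // [c + x]addrC addrK.
by rewrite min_r ?ltW // ltrBlDl.
Qed.

Section timeline.
Variables (R : realType) (N : nat) (sigma : R).
Hypothesis sigma_gt0 : 0 < sigma.

(* Both [delivered_by] and [txtime_by] are of this form, with a per-round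
   contribution that only depends on the time elapsed since the round began. *)
Definition round_sum (dur : nat -> 'I_N -> R) (G : nat -> R -> R) (t : R) : R :=
  \sum_(n < rounds_by sigma t) G n (t - round_start sigma dur n).

Lemma busy_ge0 (dur : nat -> 'I_N -> R) n : 0 <= busy dur n.
Proof. by rewrite /busy; elim/big_rec: _ => // i x _ x_ge0; rewrite le_max x_ge0 orbT. Qed.

Lemma round_startS (dur : nat -> 'I_N -> R) n :
  round_start sigma dur n.+1 = round_start sigma dur n + (sigma + busy dur n).
Proof. by rewrite /round_start big_ord_recr. Qed.

Lemma round_start_ge (dur : nat -> 'I_N -> R) n : n%:R * sigma <= round_start sigma dur n.
Proof.
elim: n => [|n IH]; first by rewrite /round_start big_ord0 mul0r.
by rewrite round_startS -natr1 mulrDl mul1r lerD // lerDl busy_ge0.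
Qed.

Lemma round_start_after (dur : nat -> 'I_N -> R) t n :
  (rounds_by sigma t <= n)%N -> t < round_start sigma dur n.
Proof.
move=> le_n; apply: lt_le_trans (round_start_ge dur n).
rewrite -ltr_pdivrMr //; apply: lt_le_trans (truncnS_gt _) _.
by rewrite ler_nat.
Qed.

Lemma round_start_shift (dur1 dur2 : nat -> 'I_N -> R) n0 :
  (forall n, (n0 <= n)%N -> dur1 n = dur2 n) ->
  forall n, (n0 <= n)%N -> round_start sigma dur1 n =
    round_start sigma dur2 n + (round_start sigma dur1 n0 - round_start sigma dur2 n0).
Proof.
move=> eq_dur; elim=> [|n IH]; first by rewrite leqn0 => /eqP ->; ring.
rewrite leq_eqVlt => /orP[/eqP <-|le_n]; first by ring.
by rewrite !round_startS IH // /busy eq_dur //; ring.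
Qed.

Lemma round_sum_shift (dur1 dur2 : nat -> 'I_N -> R) (G1 G2 : nat -> R -> R)
    (K1 K2 : nat -> R) n0 t :
  (forall n, (n0 <= n)%N -> dur1 n = dur2 n) ->
  (forall n, (n0 <= n)%N -> G1 n = G2 n) ->
  (forall n x, x < 0 -> G1 n x = 0) -> (forall n x, x < 0 -> G2 n x = 0) ->
  (forall n x, `|G1 n x| <= K1 n) -> (forall n x, `|G2 n x| <= K2 n) ->
  `|round_sum dur1 G1 t -
    round_sum dur2 G2 (t - (round_start sigma dur1 n0 - round_start sigma dur2 n0))|
  <= \sum_(n < n0) (K1 n + K2 n).
Proof.
move=> eq_dur eq_G G1_0 G2_0 G1_le G2_le.
set C := round_start sigma dur1 n0 - _; set t' := t - C; rewrite /round_sum.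
set B := maxn (maxn (rounds_by sigma t) (rounds_by sigma t')) n0.
have vanish (dur : nat -> 'I_N -> R) (G : nat -> R -> R) s :
    (forall n x, x < 0 -> G n x = 0) ->
    forall n, (rounds_by sigma s <= n)%N -> G n (s - round_start sigma dur n) = 0.
  by move=> G_0 n le_n; apply: G_0; rewrite subr_lt0 round_start_after.
rewrite (sum_ord_extend (M := B) _ (vanish dur1 _ t G1_0)); last by rewrite !leq_max leqnn.
rewrite (sum_ord_extend (M := B) _ (vanish dur2 _ t' G2_0));
  last by rewrite !leq_max leqnn orbT.
pose D n := G1 n (t - round_start sigma dur1 n) - G2 n (t' - round_start sigma dur2 n).
have D0 n : (n0 <= n)%N -> D n = 0.
  move=> le_n; rewrite /D (round_start_shift eq_dur) // eq_G // /t'.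
  have -> : t - (round_start sigma dur2 n + C) = t - C - round_start sigma dur2 n by ring.
  by rewrite subrr.
rewrite -sumrB -(sum_ord_extend _ D0) ?leq_max ?leqnn ?orbT //.
apply: le_trans (ler_norm_sum _ _ _) (ler_sum _ _) => n _.
by apply: le_trans (ler_normB _ _) _; exact: lerD.
Qed.

Lemma delivered_by_round_sum (dur : nat -> 'I_N -> R) bits k t :
  delivered_by sigma dur bits k t =
  round_sum dur (fun n x => if sigma + busy dur n <= x then (bits n k)%:R else 0) t.
Proof.
apply: eq_bigr => n _; congr (if _ then _ else _).
by apply/idP/idP => ?; lra.
Qed.

Lemma txtime_by_round_sum (dur : nat -> 'I_N -> R) k t :
  txtime_by sigma dur k t =
  round_sum dur (fun n x => Num.max 0 (Num.min (sigma + dur n k) x - sigma)) t.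
Proof.
apply: eq_bigr => n _; congr (Num.max 0 _).
by rewrite minrBl_shift [RHS]minrBl_shift opprD addrA.
Qed.

End timeline.

Lemma norm_overlap_le (R : realDomainType) (s d x : R) :
  `|Num.max 0 (Num.min (s + d) x - s)| <= `|d|.
Proof.
rewrite ger0_norm ?le_max ?lexx // ge_max normr_ge0 /= lerBlDl.
by rewrite ge_min lerD2l ler_norm.
Qed.

Lemma overlap_eq0 (R : realDomainType) (s d x : R) : 0 <= s -> x < 0 ->
  Num.max 0 (Num.min (s + d) x - s) = 0.
Proof.
move=> s_ge0 x_lt0; apply: max_l; rewrite subr_le0 ge_min.
by rewrite (ltW (lt_le_trans x_lt0 s_ge0)) orbT.
Qed.

Lemma cvg_div_shift (R : realType) (f g : R -> R) (C K S : R) :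
  (forall t, `|f t - g (t - C)| <= K) ->
  (g t / t) @[t --> +oo] --> S -> (f t / t) @[t --> +oo] --> S.
Proof.
move=> fg_le /cvgrPdist_lt g_cvg; apply/cvgrPdist_lt => e e_gt0.
have [M [_ M_le]] := g_cvg _ (divr_gt0 e_gt0 (ltr0n _ 4)).
have K_ge0 : 0 <= K := le_trans (normr_ge0 _) (fg_le 0).
exists (Num.max (M + C) (Num.max (`|C| + 1) (2 * (K + `|S| * `|C|) / e + 1))).
split; first by rewrite num_real.
move=> t; rewrite !gt_max => /andP[t_gtM /andP[t_gtC t_gtK]].
have t_gt0 : 0 < t by apply: le_lt_trans t_gtC; rewrite addr_ge0.
set u := t - C.
have C_le := ler_norm C; have NC_le : - C <= `|C| by rewrite -normrN ler_norm.
have u_gt0 : 0 < u by rewrite /u; lra.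
have gu_near : `|S - g u / u| < e / 4 by apply: M_le; rewrite /u; lra.
have gu_lin : `|g u - S * u| < e / 4 * u.
  have -> : g u - S * u = - (u * (S - g u / u)) by field; rewrite gt_eqF.
  by rewrite normrN normrM gtr0_norm // mulrC ltr_pM2r.
have eK : 2 * (K + `|S| * `|C|) < e * t.
  by rewrite mulrC -ltr_pdivrMl // mulrC; lra.
(* [S t - f t] splits into [g u - f t], [S u - g u] and [S (t - u)]. *)
rewrite -(ltr_pM2r t_gt0).
have -> : `|S - f t / t| * t = `|(S - f t / t) * t| by rewrite normrM (gtr0_norm t_gt0).
have -> : (S - f t / t) * t = - ((f t - g u) + (g u - S * u) + S * (u - t)).
  by rewrite /u; field; rewrite gt_eqF.
have SC : `|S * (u - t)| = `|S| * `|C|.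
  by rewrite normrM /u (_ : t - C - t = - C) ?normrN //; ring.
have fg := fg_le t; rewrite -/u in fg.
have n1 := ler_normD (f t - g u + (g u - S * u)) (S * (u - t)).
have n2 := ler_normD (f t - g u) (g u - S * u).
have u_le : u <= 2 * t by rewrite /u; lra.
rewrite normrN; nra.
Qed.

Lemma cvg_div_shift_iff (R : realType) (f g : R -> R) (C K S : R) :
  (forall t, `|f t - g (t - C)| <= K) ->
  ((f t / t) @[t --> +oo] --> S) <-> ((g t / t) @[t --> +oo] --> S).
Proof.
move=> fg_le; split; last exact: cvg_div_shift fg_le.
apply: (@cvg_div_shift _ g f (- C) K) => t.
by rewrite distrC opprK; have := fg_le (t + C); rewrite addrK.
Qed.

Lemma delivered_by_avg_eventually_eq (R : realType) (N : nat) (sigma : R)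
    (dur1 dur2 : nat -> 'I_N -> R) (bits1 bits2 : nat -> 'I_N -> nat) n0 k (S : R) :
  0 < sigma ->
  (forall n, (n0 <= n)%N -> dur1 n = dur2 n) ->
  (forall n, (n0 <= n)%N -> bits1 n = bits2 n) ->
  ((delivered_by sigma dur1 bits1 k t / t) @[t --> +oo] --> S) <->
  ((delivered_by sigma dur2 bits2 k t / t) @[t --> +oo] --> S).
Proof.
move=> sigma_gt0 eq_dur eq_bits; apply: cvg_div_shift_iff => t.
rewrite !delivered_by_round_sum.
apply: (round_sum_shift sigma_gt0 (K1 := fun n => (bits1 n k)%:R)
                                  (K2 := fun n => (bits2 n k)%:R) t eq_dur).
- by move=> n le_n; apply: funext => x; rewrite /busy eq_dur // eq_bits.
- move=> n x x_lt0; case: ifP => // le_x; have := busy_ge0 dur1 n; lra.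
- move=> n x x_lt0; case: ifP => // le_x; have := busy_ge0 dur2 n; lra.
- by move=> n x; case: ifP; rewrite ?normr0 ?normr_nat.
- by move=> n x; case: ifP; rewrite ?normr0 ?normr_nat.
Qed.

Lemma txtime_by_avg_eventually_eq (R : realType) (N : nat) (sigma En : R)
    (dur1 dur2 : nat -> 'I_N -> R) n0 k (Eb : R) :
  0 < sigma ->
  (forall n, (n0 <= n)%N -> dur1 n = dur2 n) ->
  ((En * txtime_by sigma dur1 k t / t) @[t --> +oo] --> Eb) <->
  ((En * txtime_by sigma dur2 k t / t) @[t --> +oo] --> Eb).
Proof.
move=> sigma_gt0 eq_dur.
pose K := `|En| * \sum_(n < n0) (`|dur1 n k| + `|dur2 n k|).
apply: (@cvg_div_shift_iff _ _ _ _ K) => t.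
rewrite -mulrBr normrM ler_wpM2l // !txtime_by_round_sum.
apply: (round_sum_shift sigma_gt0 (K1 := fun n => `|dur1 n k|)
                                  (K2 := fun n => `|dur2 n k|) t eq_dur).
- by move=> n le_n; apply: funext => x; rewrite eq_dur.
- by move=> n x; apply: overlap_eq0; exact: ltW.
- by move=> n x; apply: overlap_eq0; exact: ltW.
- by move=> n x; exact: norm_overlap_le.
- by move=> n x; exact: norm_overlap_le.
Qed.

Lemma fairmac0_long_run_eq (R : realType) (N : nat) (Rl : 'I_N -> 'I_N -> R)
    (Ra : 'I_N -> R) (helper : 'I_N -> option 'I_N) (P : nat) (sigma En : R)
    (A : nat -> 'I_N -> bool) (k : 'I_N) :
  0 < sigma -> succeeds_infinitely_often A ->
  let fair := fairmac Rl Ra helper P 0 A in let dl := direct Ra A in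
  (forall S : R, ((delivered_by sigma fair.1 fair.2 k t / t) @[t --> +oo] --> S) <->
             ((delivered_by sigma dl.1 dl.2 k t / t) @[t --> +oo] --> S)) /\
  (forall Eb : R, ((En * txtime_by sigma fair.1 k t / t) @[t --> +oo] --> Eb) <->
              ((En * txtime_by sigma dl.1 k t / t) @[t --> +oo] --> Eb)).
Proof.
move=> sigma_gt0 io fair dl.
have [n0 no_helper] := eventually_no_helper helper P io.
have eq_from n : (n0 <= n)%N -> fair.1 n = dl.1 n /\ fair.2 n = dl.2 n.
  by move=> le_n; apply: fairmac0_eq_direct => k'; exact: no_helper.
split=> [S|Eb].
  by apply: delivered_by_avg_eventually_eq => // n /eq_from[].
by apply: txtime_by_avg_eventually_eq => // n /eq_from[].
Qed.

Lemma ae_iff (d : measure_display) (T : measurableType d) (R : realType)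
    (mu : {measure set T -> \bar R}) (F G : T -> Prop) :
  {ae mu, forall w, F w <-> G w} ->
  {ae mu, forall w, F w} <-> {ae mu, forall w, G w}.
Proof.
by move=> FG; split; apply: filterS2 FG => w FG_w; [rewrite -FG_w | rewrite FG_w].
Qed.

Theorem proposition1 (R : realType) (N : nat) (d : measure_display)
    (T : measurableType d) (Pr : probability T R)
    (X : nat -> 'I_N -> T -> bool) (tau sigma En : R)
    (Rl : 'I_N -> 'I_N -> R) (Ra : 'I_N -> R)
    (helper : 'I_N -> option 'I_N) (P : nat) :
  0 < tau -> tau < 1 -> 0 < sigma -> 0 < En ->
  (forall k l, 0 < Rl k l) -> (forall k, 0 < Ra k) ->
  is_helper_map Rl Ra helper ->
  bernoulli_attempts Pr X tau ->
  (forall (k : 'I_N) (S : R),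
     throughput_is Pr X sigma (fairmac Rl Ra helper P 0) k S <->
     throughput_is Pr X sigma (direct Ra) k S) /\
  (forall (k : 'I_N) (B : R),
     bitcost_is Pr X sigma En (fairmac Rl Ra helper P 0) k B <->
     bitcost_is Pr X sigma En (direct Ra) k B).
Proof.
move=> tau_gt0 tau_lt1 sigma_gt0 _ _ _ _ hX.
have io := succeeds_infinitely_often_ae hX tau_gt0 tau_lt1.
have long_run k w := @fairmac0_long_run_eq _ _ Rl Ra helper P sigma En
  (fun n j => X n j w) k sigma_gt0.
have throughput k S : throughput_is Pr X sigma (fairmac Rl Ra helper P 0) k S <->
    throughput_is Pr X sigma (direct Ra) k S.
  by apply: ae_iff; apply: filterS io => w /(long_run k w)[].
have power k Eb : avg_power_is Pr X sigma En (fairmac Rl Ra helper P 0) k Eb <->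
    avg_power_is Pr X sigma En (direct Ra) k Eb.
  by apply: ae_iff; apply: filterS io => w /(long_run k w)[].
split=> // k B; rewrite /bitcost_is.
by split=> -[Eb [S [pow_k [thr_k ->]]]]; exists Eb, S;
  rewrite (power k Eb) (throughput k S) in pow_k thr_k *.
Qed.
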